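(* Let $n',n''\ge 0$ be integers, $n=n'+n''$, and consider the system $\dot x=f(x)$ on $\mathbb{R}^n$ with $x=(x';x'')$, $x'\in\mathbb{R}^{n'}$, $x''\in\mathbb{R}^{n''}$, of the form $$\dot x'(t)=A'x'(t)+D,\qquad \dot x''(t)=A''x''(t)+g(x'(t)),$$ where $A'\in\mathbb{R}^{n'\times n'}$ and $A''\in\mathbb{R}^{n''\times n''}$ are constant matrices, $D\in\mathbb{R}^{n'}$ is a constant vector, and $g:\mathbb{R}^{n'}\to\mathbb{R}^{n''}$ is a polynomial map. Then this system (i.e., the vector field $f(x)=(A'x'+D;\,A''x''+g(x'))$) is super-linearizable.
   Context: Super-linearization: let $\Pi:\mathbb{R}^{n+m}\to\mathbb{R}^n$ be the projection $\Pi(z)=(z_1,\ldots,z_n)$. A vector field $f:\mathbb{R}^n\to\mathbb{R}^n$ is super-linearizable if there exist an integer $m\ge 0$, a matrix $A\in\mathbb{R}^{(n+m)\times(n+m)}$, a vector $D\in\mathbb{R}^{n+m}$ and an injective map $p:\mathbb{R}^n\to\mathbb{R}^m$ (the observables) such that for all $x_0\in\mathbb{R}^n$ and all $t$, $\Pi\big(e^{t(Az+D)}z_0\big)=e^{tf}x_0$ where $z_0=(x_0,p(x_0))$. Here $e^{tg}y_0$ denotes the solution at time $t$ of $\dot y=g(y)$ with initial state $y_0$. *)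

From HB Require Import structures.
From mathcomp Require Import all_boot all_order all_algebra.
From mathcomp Require Import all_classical all_reals all_analysis.
From mathcomp Require mpoly.
Set Implicit Arguments. Unset Strict Implicit. Unset Printing Implicit Defensive.
Import Order.TTheory GRing.Theory Num.Theory.
Import numFieldNormedType.Exports.
Local Open Scope ring_scope.

Definition is_solution (R : realType) (k : nat) (F : 'cV[R]_k -> 'cV[R]_k)
  (y0 : 'cV[R]_k) (y : R -> 'cV[R]_k) : Prop :=
  y 0 = y0 /\ forall t : R, is_derive t (1 : R) y (F (y t)).

(* "e^{tf} x0 = w t for all t": the flow of f from x0 is the curve w, i.e.
   w solves the ODE with initial state x0 and it is the (unique) solution. *)
Definition is_flow (R : realType) (k : nat) (F : 'cV[R]_k -> 'cV[R]_k)
  (x0 : 'cV[R]_k) (w : R -> 'cV[R]_k) : Prop :=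
  is_solution F x0 w /\
  forall y : R -> 'cV[R]_k, is_solution F x0 y -> forall t, y t = w t.

(* Super-linearization (the projection Pi keeps the first n coordinates). *)
Definition super_linearizable (R : realType) (n : nat)
  (f : 'cV[R]_n -> 'cV[R]_n) : Prop :=
  exists (m : nat) (A : 'M[R]_(n + m)) (D : 'cV[R]_(n + m))
         (p : 'cV[R]_n -> 'cV[R]_m),
    injective p /\
    forall x0 : 'cV[R]_n,
      exists z : R -> 'cV[R]_(n + m),
        is_flow (fun w => A *m w + D) (col_mx x0 (p x0)) z /\
        is_flow f x0 (fun t => usubmx (z t)).

Definition polynomial_map (R : realType) (a b : nat)
  (g : 'cV[R]_a -> 'cV[R]_b) : Prop :=
  exists P : 'I_b -> mpoly.mpoly a R,
    forall (x : 'cV[R]_a) (i : 'I_b),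
      g x i 0 = mpoly.meval (fun j => x j 0) (P i).

(* With [Y = (x'; 1)] the first block is the linear system [Y' = B Y] with
   [B = [A' D; 0 0]], and by the Leibniz rule the tensor power [Y^(x)d] solves a
   linear system as well.  The coordinates of [Y^(x)d] are all monomials of
   degree at most [d] in [x'], so [g x' = C Y^(x)d] once [d] bounds the degree
   of [g].  Hence [(x; x; Y^(x)d)] obeys an affine system; the copy of [x]
   makes the observables injective.  The flows are then compared by existence
   (exponential series) and uniqueness (Gronwall) of solutions of linear ODEs. *)

From HB Require Import structures.
From mathcomp Require Import all_boot all_order all_algebra.
From mathcomp Require Import all_classical all_reals all_analysis.
From mathcomp Require mpoly.
Import (canonicals, coercions) mpoly.
From mathcomp Require Import ring lra.
Set Implicit Arguments.
Unset Strict Implicit.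
Unset Printing Implicit Defensive.
Import Order.TTheory GRing.Theory Num.Theory.
Import numFieldNormedType.Exports.
Local Open Scope ring_scope.

Section vector_derive.
Variable R : realType.
Implicit Types t : R.

Lemma is_derive_cVP k (f : R -> 'cV[R]_k) t (df : 'cV[R]_k) :
  is_derive t 1 f df <-> forall i, is_derive t 1 (fun s => f s i 0) (df i 0).
Proof.
split=> [fdf i|fdf].
- have f_t : derivable f t 1 by case: fdf.
  apply: DeriveDef; first exact: (derivable_mxP f t 1).1 f_t i 0.
  have := congr1 (fun M : 'cV[R]_k => M i 0) (derive_mx f_t).
  by rewrite mxE => <-; rewrite derive_val.
- have f_t : derivable f t 1.
    by apply/derivable_mxP => i j; rewrite (ord1 j); case: (fdf i).
  apply: DeriveDef => //; rewrite derive_mx //.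
  by apply/matrixP => i j; rewrite mxE (ord1 j) derive_val.
Qed.

Lemma is_derive_col_mx a b (f : R -> 'cV[R]_a) (g : R -> 'cV[R]_b) t df dg :
  is_derive t 1 f df -> is_derive t 1 g dg ->
  is_derive t 1 (fun s => col_mx (f s) (g s)) (col_mx df dg).
Proof.
move=> /is_derive_cVP fdf /is_derive_cVP gdg; apply/is_derive_cVP => i.
by case: (split_ordP i) => j ->;
  under eq_fun do rewrite ?col_mxEu ?col_mxEd; rewrite ?col_mxEu ?col_mxEd.
Qed.

Lemma is_derive_usubmx a b (z : R -> 'cV[R]_(a + b)) t dz :
  is_derive t 1 z dz -> is_derive t 1 (fun s => usubmx (z s)) (usubmx dz).
Proof.
move=> /is_derive_cVP zdz; apply/is_derive_cVP => i.
by under eq_fun do rewrite mxE; rewrite mxE.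
Qed.

Lemma is_derive_dsubmx a b (z : R -> 'cV[R]_(a + b)) t dz :
  is_derive t 1 z dz -> is_derive t 1 (fun s => dsubmx (z s)) (dsubmx dz).
Proof.
move=> /is_derive_cVP zdz; apply/is_derive_cVP => i.
by under eq_fun do rewrite mxE; rewrite mxE.
Qed.

Lemma is_derive_prod d (u : 'I_d -> R -> R) (du : 'I_d -> R) t :
  (forall i, is_derive t 1 (u i) (du i)) ->
  is_derive t 1 (fun s => \prod_i u i s)
    (\sum_i \prod_j (if j == i then du j else u j t)).
Proof.
elim: d u du => [|d IH] u du udu.
  by under eq_fun do rewrite big_ord0; rewrite big_ord0; exact: is_derive_cst.
have -> : (fun s => \prod_i u i s) =
    (fun s => \prod_(i < d) u (widen_ord (leqnSn d) i) s) * u ord_max.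
  by apply/funext => s; rewrite big_ord_recr.
have IHd := IH _ (fun i => du (widen_ord (leqnSn d) i)) (fun i => udu _).
apply: is_derive_eq (is_deriveM IHd (udu ord_max)) _.
rewrite big_ord_recr /= addrC /GRing.scale /=; congr (_ + _).
  rewrite big_ord_recr /= eqxx; congr (_ * _); apply: eq_bigr => i _.
  by rewrite -val_eqE /= ltn_eqF.
rewrite mulr_sumr; apply: eq_bigr => i _.
rewrite big_ord_recr /= -[ord_max == _]val_eqE /= gtn_eqF // mulrC.
by congr (_ * _); apply: eq_bigr => j _; rewrite -[_ == widen_ord _ _]val_eqE.
Qed.

End vector_derive.

Section gronwall.
Variable R : realType.
Implicit Types (phi dphi : R -> R) (c s t : R).

(* [expR (- c s) * phi s] is nonincreasing and vanishes at [0]. *)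
Lemma gronwall_eq0_ge0 phi dphi c :
  (forall s, is_derive s 1 phi (dphi s)) -> (forall s, 0 <= phi s) ->
  (forall s, `|dphi s| <= c * phi s) -> phi 0 = 0 ->
  forall t, 0 <= t -> phi t = 0.
Proof.
move=> phi_dphi phi_ge0 dphi_le phi0 t t_ge0; apply/eqP.
rewrite eq_le phi_ge0 andbT.
pose psi s := expR (- c * s) * phi s.
have psi_dpsi s : is_derive s 1 psi (expR (- c * s) * (dphi s - c * phi s)).
  have e_de : is_derive s 1 (fun s => expR (- c * s)) (expR (- c * s) * - c).
    apply: (is_derive1_comp (is_derive_expR _)).
    by apply: is_derive_eq (is_deriveZ (- c) (is_derive_id s 1)) _; rewrite scaler1.
  apply: is_derive_eq (is_deriveM e_de (phi_dphi s)) _.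
  rewrite /GRing.scale /=; ring.
have psi_cont : continuous psi.
  by move=> s; apply/differentiable_continuous/derivable1_diffP; case: (psi_dpsi s).
have [x _] := MVT_segment t_ge0 (fun x _ => psi_dpsi x) (continuous_subspaceT psi_cont).
rewrite /psi mulr0 expR0 mul1r phi0 subr0 => psi_t.
suff : psi t <= 0 by rewrite /psi pmulr_rle0 ?expR_gt0.
rewrite /psi psi_t; apply: mulr_le0_ge0; last by rewrite subr0.
rewrite pmulr_rle0 ?expR_gt0 // subr_le0.
exact: le_trans (ler_norm _) (dphi_le x).
Qed.

Lemma gronwall_eq0 phi dphi c :
  (forall s, is_derive s 1 phi (dphi s)) -> (forall s, 0 <= phi s) ->
  (forall s, `|dphi s| <= c * phi s) -> phi 0 = 0 -> forall t, phi t = 0.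
Proof.
move=> phi_dphi phi_ge0 dphi_le phi0 t.
have [|t_lt0] := leP 0 t; first exact: gronwall_eq0_ge0.
have phiN_dphiN s : is_derive s 1 (phi \o -%R) (dphi (- s) * -1).
  exact: is_derive1_comp (phi_dphi _) (is_deriveNid _ _).
suff : (phi \o -%R) (- t) = 0 by rewrite /= opprK.
apply: (gronwall_eq0_ge0 (c := c) phiN_dphiN) => //= [s||].
- by rewrite normrM normrN1 mulr1.
- by rewrite oppr0.
- by rewrite oppr_ge0 ltW.
Qed.

End gronwall.

Section linear_ode_uniq.
Variables (R : realType) (k : nat) (M : 'M[R]_k).
Implicit Types (s t : R) (u : 'cV[R]_k).

Lemma normr_quad_form_le u :
  `|\sum_i u i 0 * (M *m u) i 0| <=
    (\sum_i \sum_j 2 * `|M i j|) * \sum_i u i 0 ^+ 2.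
Proof.
set S := \sum_i u i 0 ^+ 2.
have sqr_le i : u i 0 ^+ 2 <= S.
  by rewrite /S (bigD1 i) //= lerDl sumr_ge0 // => j _; rewrite sqr_ge0.
rewrite mulr_suml (le_trans (ler_norm_sum _ _ _)) // ler_sum // => i _.
rewrite mxE mulr_sumr mulr_suml (le_trans (ler_norm_sum _ _ _)) // ler_sum // => j _.
have uij_le : `|u i 0 * u j 0| <= 2 * S.
  have := sqr_le i; have := sqr_le j.
  by rewrite ler_norml; move=> ? ?; apply/andP; split; nra.
rewrite mulrCA normrM (_ : 2 * `|M i j| * S = `|M i j| * (2 * S)); last by ring.
by rewrite ler_wpM2l.
Qed.

Lemma linear_ode_uniq v0 (y z : R -> 'cV[R]_k) :
  is_solution (mulmx M) v0 y -> is_solution (mulmx M) v0 z -> y = z.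
Proof.
move=> [y0 y_dy] [z0 z_dz].
pose u s := y s - z s.
have u_du s : is_derive s 1 u (M *m u s).
  by apply: is_derive_eq (is_deriveB (y_dy s) (z_dz s)) _; rewrite mulmxBr.
pose phi s := \sum_i u s i 0 ^+ 2.
have phi_dphi s : is_derive s 1 phi (2 * \sum_i u s i 0 * (M *m u s) i 0).
  have -> : phi = \sum_i (fun s => u s i 0) ^+ 2.
    by apply/funext => r; rewrite fct_sumE; apply: eq_bigr => i _; rewrite exprfctE.
  have ui_dui i := (is_derive_cVP _ _ _).1 (u_du s) i.
  apply: is_derive_eq (is_derive_sum (fun i => is_deriveX 2 (ui_dui i))) _.
  by rewrite mulr_sumr; apply: eq_bigr => i _; rewrite /GRing.scale /= expr1 mulrA.
have phi_ge0 s : 0 <= phi s by apply: sumr_ge0 => i _; rewrite sqr_ge0.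
have dphi_le s : `|2 * \sum_i u s i 0 * (M *m u s) i 0| <=
    (2 * \sum_i \sum_j 2 * `|M i j|) * phi s.
  by rewrite normrM ger0_norm // -mulrA ler_wpM2l // normr_quad_form_le.
have phi0 : phi 0 = 0.
  by rewrite /phi /u y0 z0 subrr; apply: big1 => i _; rewrite mxE expr0n.
apply/funext => t; apply/eqP; rewrite -subr_eq0; apply/eqP/matrixP => i j.
have := gronwall_eq0 phi_dphi phi_ge0 dphi_le phi0 t.
move=> /(psumr_eq0P (fun l _ => sqr_ge0 _)) /(_ i isT) /eqP.
by rewrite sqrf_eq0 (ord1 j) [RHS]mxE => /eqP.
Qed.

End linear_ode_uniq.

Lemma lim_pseries0 (R : realType) (c : R^nat) : limn (pseries c 0) = c 0%N.
Proof.
apply: lim_near_cst => //; near=> n.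
have n_gt0 : (0 < n)%N by near: n; exists 1%N.
rewrite /pseries /series /= -(prednK n_gt0) big_nat_recl // expr0 mulr1.
by rewrite big1 ?addr0 // => i _; rewrite expr0n mulr0.
Unshelve. all: by end_near.
Qed.

Section linear_ode_exists.
Variables (R : realType) (k : nat) (M : 'M[R]_k) (v0 : 'cV[R]_k).
Implicit Types (t : R) (a : 'I_k).

(* The Taylor coefficients of the [a]-th coordinate of [t |-> M^r e^(t M) v0]. *)
Definition expmx_coef r a i : R := (M ^+ (i + r) *m v0) a 0 / i`!%:R.

Lemma pseries_diffs_expmx_coef r a :
  pseries_diffs (expmx_coef r a) = expmx_coef r.+1 a.
Proof.
apply/funext => i; rewrite /pseries_diffs /expmx_coef addSnnS factS natrM.
have Si_neq0 : i.+1%:R != 0 :> R by rewrite pnatr_eq0.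
by rewrite invfM mulrCA mulVKf.
Qed.

Let B := \sum_a `|v0 a 0|.
Let N := 1 + \sum_a \sum_b `|M a b|.

Let B_ge0 : 0 <= B. Proof. exact: sumr_ge0. Qed.

Let N_ge0 : 0 <= N.
Proof. by rewrite addr_ge0 // sumr_ge0 // => a _; rewrite sumr_ge0. Qed.

Lemma normr_expr_mulmx_le j a : `|(M ^+ j *m v0) a 0| <= B * N ^+ j.
Proof.
elim: j a => [|j IH] a.
  by rewrite !expr0 mul1mx mulr1 /B (bigD1 a) //= lerDl sumr_ge0.
rewrite exprS -mulmxA mxE (le_trans (ler_norm_sum _ _ _)) //.
apply: (@le_trans _ _ (\sum_b `|M a b| * (B * N ^+ j))).
  by apply: ler_sum => b _; rewrite normrM ler_wpM2l.
rewrite -mulr_suml exprS (mulrCA B).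
apply: ler_wpM2r; first by rewrite mulr_ge0 ?exprn_ge0.
rewrite /N [X in _ <= 1 + X](bigD1 a) //= addrCA lerDl addr_ge0 //.
by rewrite sumr_ge0 // => b _; rewrite sumr_ge0.
Qed.

Lemma is_cvg_pseries_expmx_coef r a t : cvgn (pseries (expmx_coef r a) t).
Proof.
apply: normed_cvg; apply: (@series_le_cvg _ _ ((B * N ^+ r) *: exp_coeff (N * `|t|))).
- by move=> i /=.
- move=> i; rewrite /exp_coeff /GRing.scale /=.
  by rewrite !mulr_ge0 ?exprn_ge0 ?invr_ge0 ?B_ge0 ?N_ge0 ?ler0n ?mulr_ge0.
- move=> i; rewrite /exp_coeff /GRing.scale /= /expmx_coef.
  rewrite !normrM normfV normr_nat normrX exprMn.
  rewrite [leRHS](_ : _ = B * N ^+ (i + r) / i`!%:R * `|t| ^+ i); last first.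
    by rewrite exprD /GRing.scale /=; ring.
  apply: ler_wpM2r; first exact: exprn_ge0.
  by apply: ler_wpM2r; rewrite ?invr_ge0 ?normr_expr_mulmx_le.
- exact: is_cvg_seriesZ (is_cvg_series_exp_coeff _).
Qed.

Lemma is_derive_pseries_expmx_coef r a t :
  is_derive t 1 (fun t => limn (pseries (expmx_coef r a) t))
    (limn (pseries (expmx_coef r.+1 a) t)).
Proof.
rewrite -pseries_diffs_expmx_coef.
apply: (@pseries_snd_diffs _ _ (`|t| + 1)); rewrite ?pseries_diffs_expmx_coef;
  [exact: is_cvg_pseries_expmx_coef.. |].
by rewrite [`|_ + 1|]ger0_norm ?ltrDl // addr_ge0.
Qed.

Lemma lim_pseries_expmx_coefS r a t : limn (pseries (expmx_coef r.+1 a) t) =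
  \sum_b M a b * limn (pseries (expmx_coef r b) t).
Proof.
apply: cvg_lim => //.
have -> : pseries (expmx_coef r.+1 a) t =
    (fun n => \sum_b M a b * pseries (expmx_coef r b) t n).
  apply/funext => n; rewrite /pseries /series /=.
  under eq_bigr do rewrite /expmx_coef addnS exprS -mulmxA mxE !mulr_suml.
  rewrite exchange_big /=; apply: eq_bigr => b _.
  by rewrite mulr_sumr; apply: eq_bigr => i _; rewrite !mulrA.
apply: cvg_big => [|b _]; first exact: add_continuous.
by apply: cvgMl_tmp; exact: is_cvg_pseries_expmx_coef.
Qed.

Lemma linear_ode_exists : exists z, is_solution (mulmx M) v0 z.
Proof.
exists (fun t => \col_a limn (pseries (expmx_coef 0 a) t)); split.
  apply/matrixP => a j; rewrite (ord1 j) mxE lim_pseries0 /expmx_coef.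
  by rewrite expr0 mul1mx fact0 invr1 mulr1.
move=> t; apply/is_derive_cVP => a.
under eq_fun do rewrite mxE.
apply: is_derive_eq (is_derive_pseries_expmx_coef 0 a t) _.
by rewrite lim_pseries_expmx_coefS mxE; apply: eq_bigr => b _; rewrite mxE.
Qed.

End linear_ode_exists.

Section affine_ode.
Variables (R : realType) (k : nat).
Implicit Types (s t : R) (A : 'M[R]_k) (b x : 'cV[R]_k).

Definition homog x : 'cV[R]_(k + 1) := col_mx x 1%:M.

Definition homog_mx A b : 'M[R]_(k + 1) := block_mx A b 0 0.

Lemma homog_mx_mul A b x (c : 'cV[R]_1) :
  homog_mx A b *m col_mx x c = col_mx (A *m x + b *m c) 0.
Proof. by rewrite mul_block_col !mul0mx addr0. Qed.

Lemma is_derive_homog A b (x : R -> 'cV[R]_k) t :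
  is_derive t 1 x (A *m x t + b) ->
  is_derive t 1 (fun s => homog (x s)) (homog_mx A b *m homog (x t)).
Proof.
move=> x_dx; rewrite homog_mx_mul mulmx1.
by apply: is_derive_col_mx x_dx _; exact: is_derive_cst.
Qed.

Lemma affine_ode_uniq A b x0 (y z : R -> 'cV[R]_k) :
  is_solution (fun x => A *m x + b) x0 y ->
  is_solution (fun x => A *m x + b) x0 z -> y = z.
Proof.
move=> [y0 y_dy] [z0 z_dz].
have hyz : (fun s => homog (y s)) = (fun s => homog (z s)).
  apply: (@linear_ode_uniq _ _ (homog_mx A b) (homog x0)).
    by split=> [|t]; [rewrite y0 | exact: is_derive_homog].
  by split=> [|t]; [rewrite z0 | exact: is_derive_homog].
by apply/funext => s; have := congr1 (fun f => usubmx (f s)) hyz; rewrite /= !col_mxKu.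
Qed.

(* The last coordinate of a solution of the homogenized system stays equal to [1]. *)
Lemma affine_ode_exists A b x0 : exists z, is_solution (fun x => A *m x + b) x0 z.
Proof.
have [y [y0 y_dy]] := linear_ode_exists (homog_mx A b) (homog x0).
have y_dy_mx t : homog_mx A b *m y t =
    col_mx (A *m usubmx (y t) + b *m dsubmx (y t)) 0.
  by rewrite -homog_mx_mul vsubmxK.
have y_last t : dsubmx (y t) = 1%:M.
  apply/matrixP => i j; rewrite !ord1.
  have d0 s : is_derive s 1 (fun s => dsubmx (y s) ord0 ord0) 0.
    have := (is_derive_cVP _ _ _).1 (is_derive_dsubmx (y_dy s)) ord0.
    by rewrite y_dy_mx col_mxKd mxE.
  by rewrite (is_derive_0_is_cst t 0 d0) y0 col_mxKd.
exists (fun t => usubmx (y t)); split; first by rewrite y0 col_mxKu.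
move=> t; apply: is_derive_eq (is_derive_usubmx (y_dy t)) _.
by rewrite y_dy_mx col_mxKu y_last mulmx1.
Qed.

End affine_ode.

Lemma super_linearizable_of_lift (R : realType) n m (F : 'cV[R]_n -> 'cV[R]_n)
    (A : 'M[R]_(n + m)) (b : 'cV[R]_(n + m)) (p : 'cV[R]_n -> 'cV[R]_m) :
  injective p ->
  (forall x0 y, is_solution F x0 y ->
    is_solution (fun z => A *m z + b) (col_mx x0 (p x0))
      (fun t => col_mx (y t) (p (y t)))) ->
  (forall x0 z, is_solution (fun z => A *m z + b) (col_mx x0 (p x0)) z ->
    is_solution F x0 (fun t => usubmx (z t))) ->
  super_linearizable F.
Proof.
move=> p_inj lift_sol proj_sol; exists m, A, b, p; split=> // x0.
have [z z_sol] := affine_ode_exists A b (col_mx x0 (p x0)).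
exists z; split.
  by split=> // y y_sol t; rewrite (affine_ode_uniq y_sol z_sol).
split=> [|y y_sol t]; first exact: proj_sol.
by rewrite -(affine_ode_uniq (lift_sol _ _ y_sol) z_sol) col_mxKu.
Qed.

Section tensor_power.
Variables (R : realType) (p d : nat).

(* The coordinates of the [d]-th tensor power of [R^p] are indexed by the words
   ['I_d -> 'I_p], numbered through [enum_rank] and [tensor_word]. *)
Definition tensor_index := {ffun 'I_d -> 'I_p}.

Definition tensor_word (s : 'I_#|tensor_index|) : tensor_index := enum_val s.

Lemma tensor_wordK : cancel enum_rank tensor_word.
Proof. exact: enum_rankK. Qed.

Definition tensor_pow (y : 'cV[R]_p) : 'cV[R]_#|tensor_index| :=
  \col_s \prod_i y (tensor_word s i) 0.

Definition ffun_set (s : tensor_index) i l : tensor_index :=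
  [ffun j => if j == i then l else s j].

Definition tensor_mx (B : 'M[R]_p) : 'M[R]_#|tensor_index| :=
  \matrix_(s, s') \sum_i \sum_l
     B (tensor_word s i) l * (s' == enum_rank (ffun_set (tensor_word s) i l))%:R.

Lemma tensor_mx_mul B (w : 'cV[R]_#|tensor_index|) s : (tensor_mx B *m w) s 0 =
  \sum_i \sum_l B (tensor_word s i) l * w (enum_rank (ffun_set (tensor_word s) i l)) 0.
Proof.
rewrite mxE; under eq_bigr do rewrite mxE mulr_suml.
rewrite exchange_big /=; apply: eq_bigr => i _.
under eq_bigr do rewrite mulr_suml.
rewrite exchange_big /=; apply: eq_bigr => l _.
rewrite (bigD1 (enum_rank (ffun_set (tensor_word s) i l))) //= eqxx mulr1.
by rewrite big1 ?addr0 // => s' /negbTE ->; rewrite mulr0 mul0r.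
Qed.

Lemma is_derive_tensor_pow B (y : R -> 'cV[R]_p) (t : R) :
  is_derive t 1 y (B *m y t) ->
  is_derive t 1 (fun s => tensor_pow (y s)) (tensor_mx B *m tensor_pow (y t)).
Proof.
move=> /is_derive_cVP y_dy; apply/is_derive_cVP => s.
under eq_fun do rewrite mxE.
apply: is_derive_eq (is_derive_prod (fun i => y_dy (tensor_word s i))) _.
rewrite tensor_mx_mul; apply: eq_bigr => i _.
rewrite (bigD1 i) //= eqxx mxE mulr_suml; apply: eq_bigr => l _.
rewrite mxE tensor_wordK [in RHS](bigD1 i) //= ffunE eqxx -mulrA; congr (_ * (_ * _)).
by apply: eq_bigr => j /negbTE j_neq_i; rewrite ffunE j_neq_i.
Qed.

End tensor_power.

Section polynomial_tensor.
Variables (R : realType) (n : nat).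
Implicit Types (x : 'cV[R]_n) (e : 'I_n -> nat).

Lemma prod_expr_pred e x j : (0 < e j)%N ->
  \prod_i x i 0 ^+ e i =
  x j 0 * \prod_i x i 0 ^+ (if i == j then (e j).-1 else e i).
Proof.
move=> ej_gt0; rewrite (bigD1 j) // [in RHS](bigD1 j) //= eqxx mulrA -exprS.
rewrite prednK //; congr (_ * _); by apply: eq_bigr => i /negbTE ->.
Qed.

Lemma monomial_prod_homog d e : (\sum_j e j <= d)%N ->
  exists sigma : 'I_d -> 'I_(n + 1), forall x,
    \prod_j x j 0 ^+ e j = \prod_i homog x (sigma i) 0.
Proof.
elim: d e => [|d IH] e e_le.
  exists (fun=> rshift n ord0) => x; rewrite big_ord0 big1 // => j _.
  by move: e_le; rewrite leqn0 sum_nat_eq0 => /forallP/(_ j)/eqP ->.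
have [j ej_gt0|e_eq0] := pickP (fun j => 0 < e j)%N.
- pose e' i := if i == j then (e j).-1 else e i.
  have e'_le : (\sum_i e' i <= d)%N.
    rewrite (bigD1 j) //= {1}/e' eqxx.
    have -> : \sum_(i < n | i != j) e' i = \sum_(i < n | i != j) e i.
      by apply: eq_bigr => i; rewrite /e' => /negbTE ->.
    by move: e_le; rewrite (bigD1 j) //= -(prednK ej_gt0) addSn ltnS.
  have [sigma' sigmaE] := IH e' e'_le.
  exists (fun i => if unlift ord0 i is Some i' then sigma' i' else lshift 1 j) => x.
  rewrite (prod_expr_pred x ej_gt0) big_ord_recl /= unlift_none col_mxEu sigmaE.
  by under [in RHS]eq_bigr do rewrite liftK.
- have [|sigma' sigmaE] := IH e.
    by move: e_le; rewrite big1 // => i _; apply/eqP; rewrite -leqn0 leqNgt e_eq0.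
  exists (fun i => if unlift ord0 i is Some i' then sigma' i' else rshift n ord0) => x.
  rewrite sigmaE big_ord_recl /= unlift_none col_mxEd mxE mul1r.
  by under [in RHS]eq_bigr do rewrite liftK.
Qed.

Lemma mpoly_tensor_pow (d : nat) (q : mpoly.mpoly n R) :
  (forall m : mpoly.multinom n, m \in mpoly.msupp q -> (mpoly.mdeg m <= d)%N) ->
  exists c : 'rV[R]_#|tensor_index (n + 1) d|, forall x,
    mpoly.meval (fun j => x j 0) q = (c *m tensor_pow d (homog x)) 0 0.
Proof.
move=> q_deg; suff [c cE] : exists c : 'rV[R]_#|tensor_index (n + 1) d|, forall x,
    \sum_(m <- mpoly.msupp q) mpoly.mcoeff m q * \prod_i x i 0 ^+ m i =
    (c *m tensor_pow d (homog x)) 0 0.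
  by exists c => x; rewrite mpoly.mevalE cE.
elim: (mpoly.msupp q) q_deg => [|m r IH] r_deg.
  by exists 0 => x; rewrite big_nil mul0mx mxE.
have [|c cE] := IH; first by move=> m' m'_r; apply: r_deg; rewrite inE m'_r orbT.
have [|sigma sigmaE] := @monomial_prod_homog d m.
  by rewrite -mpoly.mdegE r_deg // mem_head.
pose sigma_ffun : tensor_index (n + 1) d := [ffun i => sigma i].
exists (mpoly.mcoeff m q *: delta_mx 0 (enum_rank sigma_ffun) + c) => x.
rewrite big_cons cE mulmxDl -scalemxAl -rowE !mxE sigmaE tensor_wordK.
by congr (_ * _ + _); apply: eq_bigr => i _; rewrite ffunE.
Qed.

Lemma polynomial_map_tensor_pow b (g : 'cV[R]_n -> 'cV[R]_b) :
  polynomial_map g -> exists d (C : 'M[R]_(b, #|tensor_index (n + 1) d|)),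
    forall x, g x = C *m tensor_pow d (homog x).
Proof.
move=> [P gE]; pose d := (\max_i mpoly.msize (P i))%N.
have P_deg i m : m \in mpoly.msupp (P i) -> (mpoly.mdeg m <= d)%N.
  move=> m_P; rewrite ltnW // (leq_trans (mpoly.msize_mdeg_lt m_P)) //.
  exact: (leq_bigmax_cond i).
have [c cE] := fin_all_exists (fun i => mpoly_tensor_pow (P_deg i)).
exists d, (\matrix_i c i) => x; apply/matrixP => i j.
by rewrite (ord1 j) gE cE -(rowK c i) -row_mul mxE.
Qed.

End polynomial_tensor.

Section triangular.
Variables (R : realType) (n' n'' d : nat).
Variables (A' : 'M[R]_n') (A'' : 'M[R]_n'') (D : 'cV[R]_n').
Local Notation K := #|tensor_index (n' + 1) d|.
Variable C : 'M[R]_(n'', K).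
Implicit Types (t : R) (x : 'cV[R]_(n' + n'')).

Let W (x1 : 'cV[R]_n') := tensor_pow d (homog x1).
Let L := tensor_mx d (homog_mx A' D).

Let F x := col_mx (A' *m usubmx x + D) (A'' *m dsubmx x + C *m W (usubmx x)).

Let Fm : 'M[R]_(n' + n'') := block_mx A' 0 0 A''.
Let G : 'M[R]_(n' + n'', K) := col_mx 0 C.
Let bF : 'cV[R]_(n' + n'') := col_mx D 0.

Let FE x : F x = Fm *m x + G *m W (usubmx x) + bF.
Proof.
rewrite -{2}[x]vsubmxK mul_block_col !mul0mx addr0 add0r mul_col_mx mul0mx.
by rewrite /F /bF !add_col_mx !addr0.
Qed.

Let usubmx_field x w : usubmx (Fm *m x + G *m w + bF) = A' *m usubmx x + D.
Proof.
rewrite -{1}[x]vsubmxK mul_block_col !mul0mx addr0 !linearD /= !col_mxKu.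
by rewrite /G mul_col_mx col_mxKu mul0mx addr0.
Qed.

Let obs x : 'cV[R]_(n' + n'' + K) := col_mx x (W (usubmx x)).

Let Az : 'M[R]_(n' + n'' + (n' + n'' + K)) :=
  block_mx Fm (row_mx 0 G) 0 (block_mx Fm G 0 L).
Let bz : 'cV[R]_(n' + n'' + (n' + n'' + K)) := col_mx bF (col_mx bF 0).

Let AzE x c w : Az *m col_mx x (col_mx c w) + bz =
  col_mx (Fm *m x + G *m w + bF) (col_mx (Fm *m c + G *m w + bF) (L *m w)).
Proof.
rewrite mul_block_col mul_row_col mul_block_col !mul0mx !add0r.
by rewrite add_col_mx add_col_mx addr0.
Qed.

Let is_derive_W (x1 : R -> 'cV[R]_n') t : is_derive t 1 x1 (A' *m x1 t + D) ->
  is_derive t 1 (fun s => W (x1 s)) (L *m W (x1 t)).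
Proof. by move/is_derive_homog; exact: is_derive_tensor_pow. Qed.

Let lift_solution x0 y : is_solution F x0 y ->
  is_solution (fun z => Az *m z + bz) (col_mx x0 (obs x0))
    (fun t => col_mx (y t) (obs (y t))).
Proof.
move=> [y0 y_dy]; split=> [|t]; first by rewrite y0.
have y1_dy1 : is_derive t 1 (fun s => usubmx (y s)) (A' *m usubmx (y t) + D).
  by have := is_derive_usubmx (y_dy t); rewrite /F col_mxKu.
apply: is_derive_eq (is_derive_col_mx (y_dy t)
  (is_derive_col_mx (y_dy t) (is_derive_W y1_dy1))) _.
by rewrite AzE FE.
Qed.

Let proj_solution x0 z :
  is_solution (fun z => Az *m z + bz) (col_mx x0 (obs x0)) z ->
  is_solution F x0 (fun t => usubmx (z t)).
Proof.
move=> [z0 z_dz].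
pose x t := usubmx (z t); pose w t := dsubmx (dsubmx (z t)).
have z_dzE t : Az *m z t + bz = col_mx (Fm *m x t + G *m w t + bF)
    (col_mx (Fm *m usubmx (dsubmx (z t)) + G *m w t + bF) (L *m w t)).
  by rewrite -AzE !vsubmxK.
have x_dx t : is_derive t 1 x (Fm *m x t + G *m w t + bF).
  by have := is_derive_usubmx (z_dz t); rewrite z_dzE col_mxKu.
have x1_dx1 t : is_derive t 1 (fun s => usubmx (x s)) (A' *m usubmx (x t) + D).
  by have := is_derive_usubmx (x_dx t); rewrite usubmx_field.
have wE : w = fun t => W (usubmx (x t)).
  apply: (linear_ode_uniq (M := L) (v0 := W (usubmx x0))); split.
  - by rewrite /w z0 !col_mxKd.
  - move=> s; have := is_derive_dsubmx (is_derive_dsubmx (z_dz s)).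
    by rewrite z_dzE !col_mxKd.
  - by rewrite /x z0 col_mxKu.
  - by move=> s; exact: is_derive_W.
split=> [|t]; first by rewrite z0 col_mxKu.
have wt : w t = W (usubmx (x t)) by rewrite wE.
by rewrite FE -wt; exact: x_dx.
Qed.

Lemma super_linearizable_triangular :
  super_linearizable (fun x : 'cV[R]_(n' + n'') => col_mx (A' *m usubmx x + D)
    (A'' *m dsubmx x + C *m tensor_pow d (homog (usubmx x)))).
Proof.
apply: (super_linearizable_of_lift (A := Az) (b := bz) (p := obs)) => //.
by move=> x y /(congr1 usubmx); rewrite !col_mxKu.
Qed.

End triangular.

Theorem proposition1 (R : realType) (n' n'' : nat)
  (A' : 'M[R]_n') (A'' : 'M[R]_n'') (D : 'cV[R]_n')
  (g : 'cV[R]_n' -> 'cV[R]_n'') :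
  polynomial_map g ->
  super_linearizable
    (fun x : 'cV[R]_(n' + n'') =>
       col_mx (A' *m usubmx x + D) (A'' *m dsubmx x + g (usubmx x))).
Proof.
move=> /polynomial_map_tensor_pow [d [C gE]].
under eq_fun do rewrite gE.
exact: super_linearizable_triangular.
Qed.
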